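(* Every twofold partition having a representation in Model $F^{\underline u}$ has a representation in Model $F^{u}$, and there exist a finite product set $X$ and a (linear) twofold partition of $X$ satisfying the standing assumptions that has a representation in Model $F^{u}$ but none in Model $F^{\underline u}$.
   Context: Setting. $N=\{1,\dots,n\}$, $n\ge2$; $X=X_1\times\dots\times X_n$, each $X_i$ finite. $(y_i,x_{-i})$ denotes $x$ with $i$-th coordinate replaced by $y_i$. A twofold partition $\langle\mathcal A,\mathcal U\rangle$ of $X$: disjoint sets with union $X$. Define $x_i\succsim_i y_i$ iff [for all $a_{-i}\in\prod_{j\ne i}X_j$, $(y_i,a_{-i})\in\mathcal A\Rightarrow(x_i,a_{-i})\in\mathcal A$]. Standing assumptions: every attribute is influential (exist $x_i,y_i,a_{-i}$ with $(x_i,a_{-i})\in\mathcal A$, $(y_i,a_{-i})\in\mathcal U$) and each $\succsim_i$ is antisymmetric. $x\succsim y$ iff $x_i\succsim_i y_i$ for all $i$. Model $F^{u}$: there are semiorders $S_i$ on $X_i$ (reflexive, Ferrers: $xS_iy, zS_iw\Rightarrow xS_iw$ or $zS_iy$; semitransitive: $xS_iy, yS_iz\Rightarrow xS_iw$ or $wS_iz$), the relation $S$ on $X$ given by $xSy$ iff $x_iS_iy_i$ for all $i\in N$ with asymmetric part $P$, and a set $\mathcal P\subseteq X$ with no $p,q\in\mathcal P$ satisfying $pPq$, such that for all $x$: $x\in\mathcal U$ iff [$pPx$ for some $p\in\mathcal P$ and not $xPq$ for all $q\in\mathcal P$]. Model $F^{\underline u}$: Model $F^{u}$ with a representation in which $S_i=\succsim_i$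 for all $i$. *)

From mathcomp Require Import all_boot.
Set Implicit Arguments. Unset Strict Implicit. Unset Printing Implicit Defensive.

Section TwofoldPartitions.
Variables (n : nat) (T : 'I_n -> finType).

Definition point := forall i : 'I_n, T i.

(* A twofold partition <A, U> is given by the set A; U is its complement. *)
Variable A : point -> Prop.
Definition inU (x : point) : Prop := ~ A x.

Definition agree_off (i : 'I_n) (a b : point) : Prop :=
  forall j, j != i -> a j = b j.

Definition pref (i : 'I_n) (xi yi : T i) : Prop :=
  forall a b : point, agree_off i a b -> a i = yi -> b i = xi -> A a -> A b.

Definition influential (i : 'I_n) : Prop :=
  exists a b : point, agree_off i a b /\ A a /\ inU b.

Definition antisym_pref (i : 'I_n) : Prop :=
  forall x y : T i, pref x y -> pref y x -> x = y.

Definition standing_assumptions : Prop :=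
  forall i, influential i /\ antisym_pref i.

(* A twofold partition is linear when every >=_i is complete
   (hence, being antisymmetric, a linear order). *)
Definition linear_partition : Prop :=
  forall i (x y : T i), pref x y \/ pref y x.

Definition semiorder (Y : Type) (R : Y -> Y -> Prop) : Prop :=
  (forall x, R x x) /\
  (forall x y z w, R x y -> R z w -> R x w \/ R z y) /\
  (forall x y z w, R x y -> R y z -> R x w \/ R w z).

Definition prodS (S : forall i, T i -> T i -> Prop) (x y : point) : Prop :=
  forall i, S i (x i) (y i).

Definition prodP (S : forall i, T i -> T i -> Prop) (x y : point) : Prop :=
  prodS S x y /\ ~ prodS S y x.

Definition Fu_rep (S : forall i, T i -> T i -> Prop) (Pset : point -> Prop) : Prop :=
  (forall i, semiorder (S i)) /\
  (forall p q, Pset p -> Pset q -> ~ prodP S p q) /\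
  (forall x, inU x <->
     ((exists p, Pset p /\ prodP S p x) /\ (forall q, Pset q -> ~ prodP S x q))).

Definition model_Fu : Prop := exists S Pset, Fu_rep S Pset.

Definition model_Fuu : Prop := exists Pset, Fu_rep pref Pset.

End TwofoldPartitions.

(* Model F^{underline u} is Model F^u with the particular choice S_i = >=_i, so
   the first part is immediate.  For the second, take X = {0,1,2}^3 and let A be
   the up-set generated by the antichain (1,2,1), (2,1,0), (2,0,2); then each
   >=_i is the natural order.  With S_i = >=_i, every element of the set of
   reference points is acceptable, and an acceptable point lying strictly below
   one of them and minimal in A would be classified unacceptable.  The point
   (1,1,2) is unacceptable, so some reference point lies strictly above it; but
   every acceptable point strictly above (1,1,2) lies strictly above a minimal
   acceptable point, since no generator is above (1,1,2).  Relaxing the third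
   semiorder to "b <= a + 1" removes the obstruction: the reference points
   (1,2,1), (1,2,2), (2,0,2), (2,1,0) then represent A. *)

From mathcomp Require Import all_boot zify.
Set Implicit Arguments. Unset Strict Implicit. Unset Printing Implicit Defensive.

Section Representations.
Variables (n : nat) (T : 'I_n -> finType) (A : point T -> Prop).

Lemma prodS_iff (R R' : forall i, T i -> T i -> Prop) (p q : point T) :
  (forall i x y, R i x y <-> R' i x y) -> prodS R p q <-> prodS R' p q.
Proof. by move=> RR'; split=> Rpq i; apply/RR'. Qed.

Lemma prodP_iff (R R' : forall i, T i -> T i -> Prop) (p q : point T) :
  (forall i x y, R i x y <-> R' i x y) -> prodP R p q <-> prodP R' p q.
Proof.
by move=> RR'; rewrite /prodP (prodS_iff p q RR') (prodS_iff q p RR').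
Qed.

Variables (S : forall i, T i -> T i -> Prop) (P : point T -> Prop).
Hypothesis rep : Fu_rep A S P.

Lemma Fu_rep_notU p : P p -> ~ inU A p.
Proof.
move=> Pp /(proj1 (proj2 (proj2 rep) p)) [[p' [Pp' p'p]] _].
exact: (proj1 (proj2 rep) p' p Pp' Pp).
Qed.

Lemma Fu_rep_minimal_inU p m :
  P p -> prodP S p m -> (forall a, A a -> ~ prodP S m a) -> inU A m.
Proof.
move=> Pp pm min_m; apply/(proj2 (proj2 rep) m); split; first by exists p.
by move=> q Pq mq; apply: (Fu_rep_notU Pq) => Aq; exact: min_m Aq mq.
Qed.

End Representations.

Lemma model_Fuu_Fu n (T : 'I_n -> finType) (A : point T -> Prop) :
  model_Fuu A -> model_Fu A.
Proof. by case=> P rep; exists (pref A), P. Qed.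

Lemma not_model_Fuu n (T : 'I_n -> finType) (A : point T -> Prop) (x : point T) :
  inU A x ->
  (forall a, A a -> prodP (pref A) a x -> exists m,
     [/\ A m, prodP (pref A) a m & forall b, A b -> ~ prodP (pref A) m b]) ->
  ~ model_Fuu A.
Proof.
move=> Ux above_x [P rep].
have [[p [Pp px]] _] := proj1 (proj2 (proj2 rep) x) Ux.
apply: (Fu_rep_notU rep Pp) => Ap.
have [m [Am pm min_m]] := above_x p Ap px.
exact: (Fu_rep_minimal_inU rep Pp pm min_m Am).
Qed.

Section PrefOfMonotone.
Variables (n : nat) (T : 'I_n -> finType) (A : point T -> Prop).
Variable le : forall i, rel (T i).
Hypothesis le_refl : forall i : 'I_n, reflexive (@le i).
Hypothesis A_monotone : forall a b : point T, (forall i, le (a i) (b i)) -> A a -> A b.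
Hypothesis A_separates : forall i (x y : T i), ~~ le y x ->
  exists a b : point T, [/\ agree_off i a b, a i = y, b i = x, A a & ~ A b].

Lemma pref_le i (x y : T i) : pref A x y <-> le y x.
Proof.
split=> [xy | yx a b ab ay bx Aa].
  apply/negPn/negP => /A_separates [a [b [ab ay bx Aa nAb]]].
  exact/nAb/(xy a b ab ay bx Aa).
apply: A_monotone Aa => j; case: (eqVneq j i) => [-> | ji]; first by rewrite ay bx.
by rewrite (ab j ji); apply: le_refl.
Qed.

End PrefOfMonotone.

Lemma semiorder_threshold (k : nat) : semiorder (fun a b : nat => b <= a + k).
Proof. by split; [|split] => *; lia. Qed.

Lemma semiorder_pullback (X Y : Type) (f : X -> Y) (R : Y -> Y -> Prop) :
  semiorder R -> semiorder (fun x y => R (f x) (f y)).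
Proof. by case=> refl [ferrers semitr]; split; [|split] => *; eauto. Qed.

Section GeneratedUpset.
Variables (X : eqType) (le : rel X) (mins : seq X).
Hypothesis le_trans : transitive le.
Hypothesis mins_antichain : {in mins &, forall m m', le m m' -> le m' m}.

Definition upset (x : X) : bool := has (le^~ x) mins.

Lemma upset_monotone x y : le x y -> upset x -> upset y.
Proof. by move=> xy /hasP [m mm mx]; apply/hasP; exists m; last exact: le_trans xy. Qed.

Lemma mins_minimal m t : m \in mins -> upset t -> ~~ (le t m && ~~ le m t).
Proof.
move=> mm /hasP [m' m'm m't]; apply/negP => /andP [tm /negP []].
exact: le_trans (mins_antichain m'm mm (le_trans m't tm)) m't.
Qed.

Lemma upset_above_min x a : upset a -> le x a -> ~~ has (le x) mins ->
  exists2 m, m \in mins & le m a && ~~ le a m.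
Proof.
move=> /hasP [m mm ma] xa /hasPn no_min; exists m => //; rewrite ma /=.
by apply/negP => am; move: (no_min m mm); rewrite (le_trans xa am).
Qed.

End GeneratedUpset.

Definition T3 : 'I_3 -> finType := fun=> 'I_3.

(* Enumerating ['I_3] does not reduce by evaluation (its [insub] goes through
   the opaque [idP]), so the finite checks below are run on coordinate lists:
   [vals p] lies in [cube], and [pt_of] inverts [vals] on [cube] only. *)
Definition vals (p : point T3) : seq nat :=
  [:: nat_of_ord (p ord0); nat_of_ord (p (Ordinal (isT : 1 < 3))); nat_of_ord (p ord_max)].

Definition pt_of (s : seq nat) : point T3 := fun i => inord (nth 0 s i).

Definition I3 : seq nat := iota 0 3.
Definition cube : seq (seq nat) :=
  [seq a :: bc | a <- I3, bc <- [seq [:: b; c] | b <- I3, c <- I3]].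

Lemma nth_vals p (i : 'I_3) : nth 0 (vals p) i = p i :> nat.
Proof. by case: i => [[|[|[|k]]] ik] //; rewrite /vals /=; do 2 f_equal; exact: val_inj. Qed.

Lemma vals_in_cube p : vals p \in cube.
Proof.
rewrite /vals; case: (p ord0) (p (Ordinal (isT : 1 < 3))) (p ord_max)
  => [[|[|[|?]]] ?] [[|[|[|?]]] ?] [[|[|[|?]]] ?] //.
Qed.

Lemma vals_pt_of s : s \in cube -> vals (pt_of s) = s.
Proof.
have: all (fun s => (size s == 3) && all (fun a => a < 3) s) cube by [].
move=> /allP cube3 /cube3; case: s => [|a [|b [|c [|]]]] //= /and4P [ha hb hc _].
by rewrite /vals /pt_of /= !inordK.
Qed.

Lemma has_vals (L : seq (seq nat)) (Q : pred (seq nat)) : {subset L <= cube} ->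
  (exists p, vals p \in L /\ Q (vals p)) <-> has Q L.
Proof.
move=> Lcube; split=> [[p [pL Qp]] | /hasP [s sL Qs]].
  by apply/hasP; exists (vals p).
by exists (pt_of s); rewrite vals_pt_of; last exact: Lcube.
Qed.

Lemma all_vals (L : seq (seq nat)) (Q : pred (seq nat)) : {subset L <= cube} ->
  (forall p, vals p \in L -> Q (vals p)) <-> all Q L.
Proof.
move=> Lcube; split=> [Q_L | /allP Q_L p pL]; last exact: Q_L.
apply/allP => s sL; have := Q_L (pt_of s).
by rewrite vals_pt_of; [apply | exact: Lcube].
Qed.

Definition cube_rel (r : nat -> rel nat) (s t : seq nat) : bool :=
  all (fun k => r k (nth 0 s k) (nth 0 t k)) I3.

Definition cube_strict (r : nat -> rel nat) (s t : seq nat) : bool :=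
  cube_rel r s t && ~~ cube_rel r t s.

Lemma prodS_vals (r : nat -> rel nat) p q :
  prodS (fun i (x y : 'I_3) => r i x y) p q <-> cube_rel r (vals p) (vals q).
Proof.
split=> [pq | /allP pq i]; last by have := pq i; rewrite !nth_vals mem_iota ltn_ord; apply.
by apply/allP => k; rewrite mem_iota /= => kl3; have := pq (Ordinal kl3); rewrite -!nth_vals.
Qed.

Lemma prodP_vals (r : nat -> rel nat) p q :
  prodP (fun i (x y : 'I_3) => r i x y) p q <-> cube_strict r (vals p) (vals q).
Proof. by rewrite /prodP /cube_strict !prodS_vals; split=> [[-> /negP] | /andP [-> /negP]]. Qed.

Definition cube_le : rel (seq nat) := cube_rel (fun=> leq).

Lemma cube_le_trans : transitive cube_le.
Proof.
move=> t s u /allP st /allP tu; apply/allP => k kI.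
exact: leq_trans (st k kI) (tu k kI).
Qed.

Definition mins : seq (seq nat) := [:: [:: 1; 2; 1]; [:: 2; 1; 0]; [:: 2; 0; 2]].

Lemma mins_antichain : {in mins &, forall m m', cube_le m m' -> cube_le m' m}.
Proof. by move=> m m'; rewrite !inE => /or3P [] /eqP -> /or3P [] /eqP ->. Qed.

Definition A3 (p : point T3) : Prop := upset cube_le mins (vals p).

Lemma A3_monotone (a b : point T3) :
  (forall i, nat_of_ord (a i) <= b i) -> A3 a -> A3 b.
Proof. by move=> /(prodS_vals (fun=> leq)) ab; exact: (upset_monotone cube_le_trans ab). Qed.

Lemma A3_separates i (x y : T3 i) : ~~ (nat_of_ord y <= x) ->
  exists a b : point T3, [/\ agree_off i a b, a i = y, b i = x, A3 a & ~ A3 b].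
Proof.
have witnesses : all (fun k => all (fun u => all (fun v => (u < v) ==> has (fun t =>
    [&& nth 0 t k == v, upset cube_le mins t, set_nth 0 t k u \in cube
      & ~~ upset cube_le mins (set_nth 0 t k u)]) cube) I3) I3) I3 by [].
have inI3 (j : 'I_3) : nat_of_ord j \in I3 by rewrite mem_iota ltn_ord.
rewrite -ltnNge => xy; move: (allP (allP (allP witnesses i (inI3 i)) x (inI3 x)) y (inI3 y)).
rewrite xy => /hasP [t tc /and4P [/eqP ti At t'c nAt']].
exists (pt_of t), (pt_of (set_nth 0 t i x)); split.
- by move=> j ji; rewrite /pt_of nth_set_nth /= val_eqE (negbTE ji).
- by rewrite /pt_of ti inord_val.
- by rewrite /pt_of nth_set_nth /= eqxx inord_val.
- by rewrite /A3 vals_pt_of.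
- by rewrite /A3 vals_pt_of //; apply/negP.
Qed.

Lemma pref_A3 i (x y : T3 i) : pref A3 x y <-> nat_of_ord y <= x.
Proof.
exact: (@pref_le _ _ A3 (fun i (u v : T3 i) => nat_of_ord u <= v) (fun _ _ => leqnn _)
  A3_monotone A3_separates).
Qed.

Lemma standing_A3 : standing_assumptions A3.
Proof.
move=> i; split.
  by have [a [b [ab _ _ Aa nAb]]] := @A3_separates i ord0 ord_max isT; exists a, b.
by move=> u v /pref_A3 vu /pref_A3 uv; apply/val_inj/anti_leq; rewrite uv vu.
Qed.

Lemma linear_A3 : linear_partition A3.
Proof. by move=> i u v; case/orP: (leq_total u v) => ?; [right | left]; apply/pref_A3. Qed.

Definition S3 (k : nat) : rel nat := fun a b => b <= a + (k == 2).

Definition P3 : seq (seq nat) := [:: [:: 1; 2; 1]; [:: 1; 2; 2]; [:: 2; 0; 2]; [:: 2; 1; 0]].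

Lemma model_Fu_A3 : model_Fu A3.
Proof.
have P3_cube : {subset P3 <= cube} by apply/allP.
have P3_antichain : all (fun p => all (fun q => ~~ cube_strict S3 p q) P3) P3 by [].
have P3_represents : all (fun t => ~~ upset cube_le mins t ==
  has (cube_strict S3 ^~ t) P3 && all (fun q => ~~ cube_strict S3 t q) P3) cube by [].
exists (fun i (u v : 'I_3) => S3 i u v), (fun p => vals p \in P3); split; [|split].
- move=> i; exact: semiorder_pullback (semiorder_threshold (nat_of_ord i == 2)).
- move=> p q pP qP /prodP_vals; apply/negP; exact: (allP (allP P3_antichain _ pP) _ qP).
move=> x; have /eqP rep_x := allP P3_represents _ (vals_in_cube x).
split=> [/negP | [[p [pP px]] x_max]].
  rewrite rep_x => /andP [/(has_vals _ P3_cube) [p [pP px]] /(all_vals _ P3_cube) x_max].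
  split; first by exists p; split=> //; apply/prodP_vals.
  by move=> q qP /prodP_vals; apply/negP/x_max.
apply/negP; rewrite rep_x; apply/andP; split.
  by apply/(has_vals _ P3_cube); exists p; split=> //; apply/prodP_vals.
by apply/(all_vals _ P3_cube) => q qP; apply/negP => /prodP_vals; apply: x_max.
Qed.

Lemma not_model_Fuu_A3 : ~ model_Fuu A3.
Proof.
have mins_cube : {subset mins <= cube} by apply/allP.
have mins_upset : all (upset cube_le mins) mins by [].
have pref_strict a b : prodP (pref A3) a b <-> cube_strict (fun=> geq) (vals a) (vals b).
  by rewrite -prodP_vals; apply: prodP_iff => i u v; exact: pref_A3.
apply: (@not_model_Fuu _ _ _ (pt_of [:: 1; 1; 2])); first by rewrite /inU /A3 vals_pt_of.
move=> a Aa /pref_strict; rewrite vals_pt_of // => /andP [xa _].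
have no_min_above : ~~ has (cube_le [:: 1; 1; 2]) mins by [].
have [m mm /andP [ma am]] := upset_above_min cube_le_trans Aa xa no_min_above.
have m_vals : vals (pt_of m) = m by apply/vals_pt_of/mins_cube.
exists (pt_of m); rewrite /A3 m_vals; split.
- exact: (allP mins_upset).
- by apply/pref_strict; rewrite m_vals; apply/andP.
- move=> b Ab /pref_strict; rewrite m_vals; apply/negP.
  exact: (mins_minimal cube_le_trans mins_antichain mm Ab).
Qed.

Theorem proposition4 :
  (forall (n : nat) (T : 'I_n -> finType) (A : point T -> Prop),
      1 < n -> standing_assumptions A -> model_Fuu A -> model_Fu A) /\
  (exists (n : nat) (T : 'I_n -> finType) (A : point T -> Prop),
      [/\ 1 < n, standing_assumptions A, linear_partition A,
          model_Fu A & ~ model_Fuu A]).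
Proof.
split=> [n T A _ _ | ]; first exact: model_Fuu_Fu.
exists 3, T3, A3; split=> //.
- exact: standing_A3.
- exact: linear_A3.
- exact: model_Fu_A3.
- exact: not_model_Fuu_A3.
Qed.
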